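(* Let $\Gamma$ be a regular axis-parallel square grid in the plane whose squares have diameter $1$ (side length $1/\sqrt{2}$), and call the open squares of $\Gamma$ cells. Let $p$ and $q$ be any two points in the plane, each lying in some cell, with $|pq|\le 1$, and let $D(p,q)$ be the closed disk having segment $pq$ as a diameter. 1. If $p$ and $q$ are in different cells, then $D(p,q)$ intersects at most $7$ cells. 2. If $p$ and $q$ are in the same cell $\pi$, then the only cells that $D(p,q)$ can intersect are $\pi$ and its four $+$-neighbors.
   Context: The $+$-neighbors of a cell $\pi$ are the four cells that share a side with $\pi$. Cells are open (they do not contain their boundary), and disks are closed. *)

From Stdlib Require Export Reals ZArith List.
Open Scope R_scope.

Definition point : Type := (R * R)%type.

Definition edist (p q : point) : R :=
  sqrt ((fst p - fst q)^2 + (snd p - snd q)^2).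

(* side length of the cells: diameter 1 means side 1/sqrt 2 *)
Definition side : R := / sqrt 2.

Definition in_cell (ox oy : R) (c : Z * Z) (z : point) : Prop :=
  ox + IZR (fst c) * side < fst z < ox + IZR (fst c + 1) * side /\
  oy + IZR (snd c) * side < snd z < oy + IZR (snd c + 1) * side.

Definition in_diam_disk (p q z : point) : Prop :=
  edist z ((fst p + fst q) / 2, (snd p + snd q) / 2) <= edist p q / 2.

Definition disk_meets_cell (ox oy : R) (p q : point) (c : Z * Z) : Prop :=
  exists z, in_cell ox oy c z /\ in_diam_disk p q z.

(* c' is a +-neighbor of c: shares a side *)
Definition plus_neighbor (c c' : Z * Z) : Prop :=
  (Z.abs (fst c - fst c') + Z.abs (snd c - snd c'))%Z = 1%Z.

From Stdlib Require Import Reals ZArith List.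
From Stdlib Require Import Lra Lia Psatz.
Import ListNotations.
Open Scope R_scope.

(* Both parts rest on reading the disk through its coordinates.
   1. The disk has diameter at most 1 <= 2 * side, so its projections meet at
   most three consecutive columns and rows: the cells it meets lie in a 3x3
   block.  Two cells at opposite corners of that block contain points whose
   coordinates both differ by more than side, i.e. points at distance more than
   sqrt 2 * side = 1, so they cannot both meet the disk; one corner of each
   diagonal is missing, leaving at most 7 cells.
   2. By Thales, z lies in the disk iff (z - p).(z - q) <= 0.  When p and q
   share a column, the x-term of this product is positive for z in another
   column, larger than side^2 two columns away, and always larger than
   -side^2/4; the same holds for rows, so z can leave the column or the row of
   the cell, but not both, and only to an adjacent one. *)

Lemma side_pos : 0 < side.
Proof. apply Rinv_0_lt_compat, sqrt_lt_R0; lra. Qed.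

Lemma side_sq : side * side = / 2.
Proof. unfold side; rewrite <- Rinv_mult, sqrt_sqrt; lra. Qed.

Lemma one_le_2side : 1 <= 2 * side.
Proof. pose proof side_pos; pose proof side_sq; nra. Qed.

Section Strips.

Variables (o s : R).
Hypothesis s_pos : 0 < s.

Definition in_strip (k : Z) (x : R) : Prop :=
  o + IZR k * s < x < o + IZR (k + 1) * s.

Lemma strip_floor (a : R) : exists k, o + IZR k * s <= a < o + IZR (k + 1) * s.
Proof.
  exists (Zfloor ((a - o) / s)); rewrite plus_IZR.
  destruct (Zfloor_bound ((a - o) / s)) as [Hlo Hhi].
  assert (Ht : (a - o) / s * s = a - o) by (field; lra).
  split; nra.
Qed.

Lemma strip_window (k0 k : Z) (a x : R) :
  o + IZR k0 * s <= a < o + IZR (k0 + 1) * s -> a <= x <= a + 2 * s ->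
  in_strip k x -> (k0 <= k <= k0 + 2)%Z.
Proof.
  unfold in_strip; rewrite !plus_IZR; intros Ha Hx Hk.
  assert (IZR k0 < IZR k + 1) by nra.
  assert (IZR k < IZR k0 + 3) by nra.
  assert (k0 < k + 1)%Z by (apply lt_IZR; rewrite plus_IZR; lra).
  assert (k < k0 + 3)%Z by (apply lt_IZR; rewrite plus_IZR; lra).
  lia.
Qed.

Lemma strip_lt (k l : Z) (x y : R) :
  in_strip k x -> in_strip l y -> (k < l)%Z -> x < y.
Proof.
  unfold in_strip; rewrite !plus_IZR; intros Hx Hy Hkl.
  apply Z.lt_le_pred, IZR_le in Hkl; rewrite <- Z.sub_1_r, minus_IZR in Hkl.
  nra.
Qed.

Lemma strip_gap (k l : Z) (x y : R) :
  in_strip k x -> in_strip l y -> (k + 2 <= l)%Z -> s < y - x.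
Proof.
  unfold in_strip; rewrite !plus_IZR; intros Hx Hy Hkl.
  apply IZR_le in Hkl; rewrite plus_IZR in Hkl.
  nra.
Qed.

Lemma strip_gap_sq (k l : Z) (x y : R) :
  in_strip k x -> in_strip l y -> (2 <= Z.abs (k - l))%Z -> s * s < (x - y) ^ 2.
Proof.
  intros Hx Hy Hkl.
  destruct (Z_le_gt_dec k l).
  - pose proof (strip_gap k l x y Hx Hy ltac:(lia)); nra.
  - pose proof (strip_gap l k y x Hy Hx ltac:(lia)); nra.
Qed.

Section SameStrip.

Variables (a : Z) (p q : R).
Hypotheses (Hp : in_strip a p) (Hq : in_strip a q).

Lemma strip_product_lower (z : R) : - (s * s) / 4 < (z - p) * (z - q).
Proof.
  assert (Hpq : (p - q) ^ 2 < s * s).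
  { unfold in_strip in *; rewrite plus_IZR in *.
    assert (- s < p - q < s) by lra; nra. }
  assert ((z - p) * (z - q) = (z - (p + q) / 2) ^ 2 - (p - q) ^ 2 / 4) by field.
  pose proof (pow2_ge_0 (z - (p + q) / 2)).
  lra.
Qed.

Lemma strip_product_trichotomy (c : Z) (z : R) : in_strip c z ->
  c = a \/ (Z.abs (c - a) = 1%Z /\ 0 < (z - p) * (z - q)) \/
  s * s < (z - p) * (z - q).
Proof.
  intros Hz.
  destruct (Z.eq_dec c a) as [|Hca]; [now left|right].
  destruct (Z_le_gt_dec 2 (Z.abs (c - a))) as [Hfar|Hnear].
  - right; destruct (Z_le_gt_dec c a).
    + pose proof (strip_gap c a z p Hz Hp ltac:(lia)).
      pose proof (strip_gap c a z q Hz Hq ltac:(lia)); nra.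
    + pose proof (strip_gap a c p z Hp Hz ltac:(lia)).
      pose proof (strip_gap a c q z Hq Hz ltac:(lia)); nra.
  - left; split; [lia|]; destruct (Z_le_gt_dec c a).
    + pose proof (strip_lt c a z p Hz Hp ltac:(lia)).
      pose proof (strip_lt c a z q Hz Hq ltac:(lia)); nra.
    + pose proof (strip_lt a c p z Hp Hz ltac:(lia)).
      pose proof (strip_lt a c q z Hq Hz ltac:(lia)); nra.
Qed.

End SameStrip.

End Strips.

Lemma edist_nonneg (p q : point) : 0 <= edist p q.
Proof. apply sqrt_pos. Qed.

Lemma edist_sq (p q : point) :
  edist p q ^ 2 = (fst p - fst q) ^ 2 + (snd p - snd q) ^ 2.
Proof.
  unfold edist; rewrite pow2_sqrt; [reflexivity|].
  pose proof (pow2_ge_0 (fst p - fst q)); pose proof (pow2_ge_0 (snd p - snd q)); lra.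
Qed.

Section DiameterDisk.

Variables p q : point.

Lemma in_diam_disk_sq (z : point) : in_diam_disk p q z ->
  (fst z - (fst p + fst q) / 2) ^ 2 + (snd z - (snd p + snd q) / 2) ^ 2
    <= edist p q ^ 2 / 4.
Proof.
  unfold in_diam_disk; intros Hz.
  set (m := ((fst p + fst q) / 2, (snd p + snd q) / 2)) in Hz.
  pose proof (edist_sq z m) as Hzm; cbn [m fst snd] in Hzm; rewrite <- Hzm.
  pose proof (edist_nonneg z m).
  nra.
Qed.

Lemma in_diam_disk_inner (z : point) : in_diam_disk p q z ->
  (fst z - fst p) * (fst z - fst q) + (snd z - snd p) * (snd z - snd q) <= 0.
Proof. intros Hz; apply in_diam_disk_sq in Hz; rewrite edist_sq in Hz; nra. Qed.

Lemma in_diam_disk_close (z1 z2 : point) :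
  in_diam_disk p q z1 -> in_diam_disk p q z2 ->
  (fst z1 - fst z2) ^ 2 + (snd z1 - snd z2) ^ 2 <= edist p q ^ 2.
Proof.
  intros H1 H2; apply in_diam_disk_sq in H1, H2.
  set (mx := (fst p + fst q) / 2) in *; set (my := (snd p + snd q) / 2) in *.
  pose proof (pow2_ge_0 (fst z1 + fst z2 - 2 * mx)).
  pose proof (pow2_ge_0 (snd z1 + snd z2 - 2 * my)).
  nra.
Qed.

Lemma in_diam_disk_coord (z : point) : in_diam_disk p q z ->
  (fst p + fst q) / 2 - edist p q / 2 <= fst z <= (fst p + fst q) / 2 + edist p q / 2 /\
  (snd p + snd q) / 2 - edist p q / 2 <= snd z <= (snd p + snd q) / 2 + edist p q / 2.
Proof.
  intros Hz; apply in_diam_disk_sq in Hz.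
  pose proof (edist_nonneg p q).
  pose proof (pow2_ge_0 (fst z - (fst p + fst q) / 2)).
  pose proof (pow2_ge_0 (snd z - (snd p + snd q) / 2)).
  split; split; nra.
Qed.

End DiameterDisk.

Definition Zpair_eq_dec (c d : Z * Z) : {c = d} + {c <> d}.
Proof. decide equality; apply Z.eq_dec. Defined.

Lemma NoDup_incl_length_avoid2 {A : Type}
    (eq_dec : forall x y : A, {x = y} + {x <> y}) (l L : list A) (e1 e2 : A) :
  NoDup l -> incl l L -> In e1 L -> In e2 L -> e1 <> e2 ->
  ~ In e1 l -> ~ In e2 l -> (length l + 2 <= length L)%nat.
Proof.
  intros Hnd Hincl H1 H2 H12 Hn1 Hn2.
  assert (Hincl' : incl l (remove eq_dec e1 (remove eq_dec e2 L))).
  { intros c Hc; apply in_in_remove; [intros ->; contradiction|].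
    apply in_in_remove; [intros ->; contradiction|]; auto. }
  pose proof (NoDup_incl_length Hnd Hincl').
  pose proof (remove_length_lt eq_dec L e2 H2).
  pose proof (remove_length_lt eq_dec _ e1 (in_in_remove eq_dec L H12 H1)).
  lia.
Qed.

Definition block3 (i j : Z) : list (Z * Z) :=
  list_prod [i; i + 1; i + 2]%Z [j; j + 1; j + 2]%Z.

Lemma in_block3 (i j : Z) (c : Z * Z) :
  (i <= fst c <= i + 2)%Z -> (j <= snd c <= j + 2)%Z -> In c (block3 i j).
Proof.
  destruct c as [x y]; cbn [fst snd]; intros Hx Hy.
  apply in_prod; cbn; lia.
Qed.

Definition far_cells (c1 c2 : Z * Z) : Prop :=
  (2 <= Z.abs (fst c1 - fst c2))%Z /\ (2 <= Z.abs (snd c1 - snd c2))%Z.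

Lemma block3_no_far_cells_length (i j : Z) (l : list (Z * Z)) :
  NoDup l -> incl l (block3 i j) ->
  (forall c1 c2, In c1 l -> In c2 l -> ~ far_cells c1 c2) -> (length l <= 7)%nat.
Proof.
  intros Hnd Hincl Hfar.
  assert (Hcorner : forall c1 c2, far_cells c1 c2 -> ~ In c1 l \/ ~ In c2 l).
  { intros c1 c2 H12; destruct (In_dec Zpair_eq_dec c1 l) as [H1|]; [|now left].
    right; intros H2; exact (Hfar c1 c2 H1 H2 H12). }
  assert (Hmiss2 : forall e1 e2, e1 <> e2 -> In e1 (block3 i j) -> In e2 (block3 i j) ->
            ~ In e1 l -> ~ In e2 l -> (length l <= 7)%nat).
  { intros e1 e2 H12 H1 H2 Hn1 Hn2.
    pose proof (NoDup_incl_length_avoid2 Zpair_eq_dec l (block3 i j) e1 e2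
      Hnd Hincl H1 H2 H12 Hn1 Hn2).
    unfold block3 in *; rewrite length_prod in *; cbn in *; lia. }
  assert (Hd1 : ~ In (i, j) l \/ ~ In (i + 2, j + 2)%Z l)
    by (apply Hcorner; unfold far_cells; cbn; lia).
  assert (Hd2 : ~ In (i + 2, j)%Z l \/ ~ In (i, j + 2)%Z l)
    by (apply Hcorner; unfold far_cells; cbn; lia).
  destruct Hd1 as [Hd1|Hd1], Hd2 as [Hd2|Hd2];
    refine (Hmiss2 _ _ _ _ _ Hd1 Hd2);
    solve [intros [=]; lia | apply in_block3; cbn; lia].
Qed.

Section GridDisk.

Variables (ox oy : R) (p q : point).

Lemma disk_meets_no_far_cells (c1 c2 : Z * Z) : edist p q <= 1 ->
  disk_meets_cell ox oy p q c1 -> disk_meets_cell ox oy p q c2 -> ~ far_cells c1 c2.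
Proof.
  intros Hd [z1 [[Hx1 Hy1] Hz1]] [z2 [[Hx2 Hy2] Hz2]] [Hfx Hfy].
  pose proof (strip_gap_sq ox side side_pos _ _ _ _ Hx1 Hx2 Hfx).
  pose proof (strip_gap_sq oy side side_pos _ _ _ _ Hy1 Hy2 Hfy).
  pose proof (in_diam_disk_close p q z1 z2 Hz1 Hz2).
  pose proof side_sq; pose proof (edist_nonneg p q).
  nra.
Qed.

Lemma disk_meets_block3 : edist p q <= 1 ->
  exists i j, forall c, disk_meets_cell ox oy p q c -> In c (block3 i j).
Proof.
  intros Hd.
  set (r := edist p q / 2).
  destruct (strip_floor ox side side_pos ((fst p + fst q) / 2 - r)) as [i Hi].
  destruct (strip_floor oy side side_pos ((snd p + snd q) / 2 - r)) as [j Hj].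
  exists i, j; intros c [z [[Hx Hy] Hz]].
  destruct (in_diam_disk_coord p q z Hz) as [Hzx Hzy]; fold r in Hzx, Hzy.
  assert (Hr : 2 * r <= 2 * side) by (pose proof one_le_2side; unfold r; lra).
  apply in_block3.
  - apply (strip_window ox side i _ _ (fst z) Hi); [lra|exact Hx].
  - apply (strip_window oy side j _ _ (snd z) Hj); [lra|exact Hy].
Qed.

Lemma disk_meets_at_most_7 (l : list (Z * Z)) : edist p q <= 1 -> NoDup l ->
  (forall c, In c l -> disk_meets_cell ox oy p q c) -> (length l <= 7)%nat.
Proof.
  intros Hd Hnd Hl.
  destruct (disk_meets_block3 Hd) as (i & j & Hblock).
  apply (block3_no_far_cells_length i j); [exact Hnd| |].
  - intros c Hc; exact (Hblock c (Hl c Hc)).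
  - intros c1 c2 H1 H2; exact (disk_meets_no_far_cells c1 c2 Hd (Hl c1 H1) (Hl c2 H2)).
Qed.

Lemma same_cell_disk_meets (c c' : Z * Z) :
  in_cell ox oy c p -> in_cell ox oy c q -> disk_meets_cell ox oy p q c' ->
  c' = c \/ plus_neighbor c c'.
Proof.
  destruct c as [a b], c' as [a' b']; unfold plus_neighbor; cbn [fst snd].
  intros [Hpx Hpy] [Hqx Hqy] [z [[Hzx Hzy] Hz]].
  pose proof (in_diam_disk_inner p q z Hz).
  pose proof (strip_product_lower ox side a _ _ Hpx Hqx (fst z)).
  pose proof (strip_product_lower oy side b _ _ Hpy Hqy (snd z)).
  destruct (strip_product_trichotomy ox side side_pos a _ _ Hpx Hqx a' _ Hzx)
    as [->|[[Hx Px]|Px]];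
  destruct (strip_product_trichotomy oy side side_pos b _ _ Hpy Hqy b' _ Hzy)
    as [->|[[Hy Py]|Py]];
  pose proof side_pos;
  solve [ now left | right; lia | exfalso; nra ].
Qed.

End GridDisk.

Theorem lemma4 (ox oy : R) (p q : point) (cp cq : Z * Z) :
  in_cell ox oy cp p -> in_cell ox oy cq q -> edist p q <= 1 ->
  (cp <> cq ->
     forall l : list (Z * Z), NoDup l ->
       (forall c, In c l -> disk_meets_cell ox oy p q c) ->
       (length l <= 7)%nat) /\
  (cp = cq ->
     forall c, disk_meets_cell ox oy p q c -> c = cp \/ plus_neighbor cp c).
Proof.
  intros Hp Hq Hd; split.
  - intros _ l Hnd Hl; exact (disk_meets_at_most_7 ox oy p q l Hd Hnd Hl).
  - intros <- c Hc; exact (same_cell_disk_meets ox oy p q cp c Hp Hq Hc).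
Qed.
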